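(* Let $n\ge 2$, let $(\pi,w)$ and $(\sigma,u)$ be threshold pairs of size $n$, and let $G_1=T(\pi,w)$ and $G_2=T(\sigma,u)$. Then $G_1=G_2$ as labeled graphs if and only if both of the following hold: (a) $w_k=u_k$ for all $k\ge 2$; (b) for every $1\le i\le n$, letting $j$ be the position of $i$ in $\pi$ (i.e. $\pi_j=i$) and $k$ the position of $i$ in $\sigma$ (i.e. $\sigma_k=i$), either $1\in\{j,k\}$ and $w_\ell=w_{\max\{j,k\}}$ for all $1<\ell\le\max\{j,k\}$, or for every $\ell$ with $\min\{j,k\}\le\ell\le\max\{j,k\}$ we have $w_\ell=w_j=w_k$.
   Context: Let $\mathcal{S}_n$ be the set of permutations of $\{1,\dots,n\}$ in one-line notation $\pi=\pi_1\cdots\pi_n$. A threshold pair of size $n$ is a pair $(\pi,w)$ with $\pi\in\mathcal{S}_n$ and $w=w_1\cdots w_n\in\{+1,-1\}^n$. The labeled graph $T(\pi,w)$ on vertex set $\{1,\dots,n\}$ is defined as follows: $G_1$ is the graph with the single vertex $\pi_1$; for $2\le i\le n$, $G_i$ is obtained from $G_{i-1}$ by adding a new vertex $\pi_i$ which is adjacent to every vertex of $G_{i-1}$ if $w_i=+1$ and is isolated if $w_i=-1$; then $T(\pi,w)=G_n$. Two labeled graphs on $\{1,\dots,n\}$ are equal if they have the same edge set. *)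

From mathcomp Require Import all_boot all_fingroup.
Set Implicit Arguments. Unset Strict Implicit. Unset Printing Implicit Defensive.

(* Conventions:
   - vertices {1,...,n} are represented by 'I_n = {0,...,n-1} (label i <-> i-1);
   - positions 1..n in one-line notation are represented by 0..n-1, so the
     one-line notation pi_1 ... pi_n is (pi 0) ... (pi (n-1)) for pi : 'S_n;
   - signs: true = +1, false = -1; a sign word w is a function 'I_n -> bool;
   - a labeled graph is given by its edge set, a set of 2-element subsets. *)

Fixpoint Tedges (n : nat) (pi : 'S_n) (w : 'I_n -> bool) (i : nat)
  : {set {set 'I_n}} :=
  match i with
  | 0 => set0
  | i'.+1 =>
      Tedges pi w i' :|:
      [set [set pi a; pi b] | a in 'I_n, b in 'I_n
                            & (a < b)%N && (nat_of_ord b == i') && w b]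
  end.

Definition T (n : nat) (pi : 'S_n) (w : 'I_n -> bool) : {set {set 'I_n}} :=
  Tedges pi w n.

From mathcomp Require Import all_boot all_fingroup zify.
Set Implicit Arguments. Unset Strict Implicit. Unset Printing Implicit Defensive.

(* Two distinct vertices are adjacent in T(pi, w) iff the later of them in pi carries sign +1,
   so T(pi, w) = T(sigma, u) iff w at the larger pi-position of any pair equals u at its larger
   sigma-position.  For m > 0, joining pi_m to the other vertices of the pi-prefix
   {pi_0, ..., pi_m} shows that w_m is u at the sigma-position of the prefix vertex y that comes
   last in sigma, and by pigeonhole that position is at least m.  Playing this against the
   symmetric statement gives w_m = u_m; iterating it upwards shows that w is constant on the
   positive positions between the pi- and sigma-position of any vertex.  Conversely, this
   constancy lets one move the two endpoints of a pair, one at a time, from their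
   pi-positions to their sigma-positions without changing the sign at the maximum. *)

Section ThresholdGraphs.

Variable n : nat.
Implicit Types (pi sigma p q : 'S_n) (w u : 'I_n -> bool) (a b l m : 'I_n).

Local Notation pos p x := ((p^-1)%g x).

Definition omax a b : 'I_n := if (a <= b)%N then b else a.
Definition omin a b : 'I_n := if (a <= b)%N then a else b.

Lemma val_omax a b : nat_of_ord (omax a b) = maxn a b.
Proof. by rewrite /omax; case: leqP => ab; lia. Qed.

Lemma val_omin a b : nat_of_ord (omin a b) = minn a b.
Proof. by rewrite /omin; case: leqP => ab; lia. Qed.

Lemma omaxC a b : omax a b = omax b a.
Proof. by apply: val_inj; rewrite /= !val_omax maxnC. Qed.

Lemma ominC a b : omin a b = omin b a.
Proof. by apply: val_inj; rewrite /= !val_omin minnC. Qed.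

Lemma omax_l a b : (b <= a)%N -> omax a b = a.
Proof. by move=> ba; apply: val_inj; rewrite /= val_omax; lia. Qed.

Lemma omax_r a b : (a <= b)%N -> omax a b = b.
Proof. by move=> ab; apply: val_inj; rewrite /= val_omax; lia. Qed.

Definition adj pi w x y : bool := w (omax (pos pi x) (pos pi y)).

Lemma adjC pi w x y : adj pi w x y = adj pi w y x.
Proof. by rewrite /adj omaxC. Qed.

Lemma omax_pos_gt0 p x y : x != y -> (0 < omax (pos p x) (pos p y))%N.
Proof.
rewrite val_omax -(inj_eq (@perm_inj _ (p^-1)%g)) -val_eqE /= => /eqP; lia.
Qed.

Lemma mem_Tedges pi w i e :
  e \in Tedges pi w i <->
  exists a b, [/\ (a < b)%N, (b < i)%N, w b & e = [set pi a; pi b]].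
Proof.
elim: i e => [|i IH] e /=; first by rewrite inE; split=> // -[a [b []]].
rewrite in_setU; split.
  case/orP => [/IH [a [b [ab bi wb ->]]] | /imset2P [a b _]].
    by exists a, b; split=> //; apply: ltnW.
  by rewrite inE /= => /andP [/andP [ab /eqP bi] wb] ->; exists a, b; split; rewrite // bi.
move=> [a [b [ab]]]; rewrite ltnS leq_eqVlt => /orP[bi | bi] wb ->.
  by apply/orP; right; apply/imset2P; exists a b; rewrite // inE ab bi.
by apply/orP; left; apply/IH; exists a, b.
Qed.

Lemma mem_T pi w e :
  e \in T pi w <-> exists a b, [/\ (a < b)%N, w b & e = [set pi a; pi b]].
Proof.
rewrite /T mem_Tedges; split => -[a [b]]; last by case=> ab wb ->; exists a, b.
by case=> ab _ wb ->; exists a, b.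
Qed.

Lemma T_edge_set2 pi w e : e \in T pi w -> exists x y, x != y /\ e = [set x; y].
Proof.
move/mem_T => [a [b [ab _ ->]]]; exists (pi a), (pi b); split=> //.
by rewrite (inj_eq perm_inj) -val_eqE neq_ltn ab.
Qed.

Lemma T_edge pi w x y : x != y -> ([set x; y] \in T pi w) = adj pi w x y.
Proof.
move=> xy; apply/idP/idP => [/mem_T [a [b [ab wb exy]]] | wxy]; last apply/mem_T.
  have /set2P[xa | xb] : x \in [set pi a; pi b] by rewrite -exy set21.
  have /set2P[ya | yb] : y \in [set pi a; pi b] by rewrite -exy set22.
  - by move: xy; rewrite xa ya eqxx.
  - by rewrite /adj xa yb !permK omax_r // ltnW.
  have /set2P[ya | yb] : y \in [set pi a; pi b] by rewrite -exy set22.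
  - by rewrite /adj xb ya !permK omax_l // ltnW.
  - by move: xy; rewrite xb yb eqxx.
have pxy : pos pi x != pos pi y by rewrite (inj_eq perm_inj).
move: wxy; rewrite /adj; case: (ltngtP (pos pi x) (pos pi y)) => [lt | lt | /val_inj eq].
- rewrite omax_r ?(ltnW lt) // => wy.
  by exists (pos pi x), (pos pi y); split; rewrite ?permKV.
- rewrite omax_l ?(ltnW lt) // => wx.
  by exists (pos pi y), (pos pi x); split; rewrite ?permKV 1?setUC.
- by rewrite eq eqxx in pxy.
Qed.

Lemma T_eq_adj pi sigma w u :
  T pi w = T sigma u <-> forall x y, x != y -> adj pi w x y = adj sigma u x y.
Proof.
split=> [E x y xy | adjE]; first by rewrite -!T_edge // E.
by apply/setP => e; apply/idP/idP => /[dup] /T_edge_set2 [x [y [xy ->]]];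
  rewrite !T_edge // adjE.
Qed.

Lemma exists_prefix_crossing p q m : exists2 z, (pos p z <= m)%N & (m <= pos q z)%N.
Proof.
have [z /andP[pz qz] | none] := pickP [pred z | (pos p z <= m) && (m <= pos q z)].
  by exists z.
pose f i := pos q (p (widen_ord (ltn_ord m) i)).
have fm (i : 'I_m.+1) : (f i < m)%N.
  have wi : (widen_ord (ltn_ord m) i <= m)%N := ltn_ord i.
  by have := none (p (widen_ord (ltn_ord m) i)); rewrite /= permK wi => /negbT; rewrite -ltnNge.
have f_inj : injective (fun i => Ordinal (fm i)).
  by move=> i j /(congr1 val) /= /val_inj /perm_inj /perm_inj /(congr1 val) /= /val_inj.
by have := leq_card _ f_inj; rewrite !card_ord ltnn.
Qed.

Lemma exists_prefix_last p q m :
  exists y, [/\ (pos p y <= m)%N, (m <= pos q y)%N &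
             forall z, (pos p z <= m)%N -> (pos q z <= pos q y)%N].
Proof.
have [z0 pz0 qz0] := exists_prefix_crossing p q m.
have [y py ymax] := @arg_maxnP _ z0 (fun z => pos p z <= m)%N (fun z => pos q z) pz0.
by exists y; split=> //; apply: leq_trans qz0 (ymax _ pz0).
Qed.

(* Join [pi m] to another vertex [v] of the [pi]-prefix of [m], taking [v = y] unless
   [y = pi m]: the edge is decided by [w m] in [T pi w] and by [u (pos sigma y)] in [T sigma u]. *)
Lemma sign_prefix_last pi sigma w u m y :
  T pi w = T sigma u -> (0 < m)%N -> (pos pi y <= m)%N ->
  (forall z, (pos pi z <= m)%N -> (pos sigma z <= pos sigma y)%N) ->
  w m = u (pos sigma y).
Proof.
move=> E m0 py ymax; set x := pi m.
have px : pos pi x = m by rewrite permK.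
have [v vx [pv yxv]] : exists2 v, v != x & (pos pi v <= m)%N /\ (y = x \/ y = v).
  have [yx | yx] := eqVneq y x; last by exists y; [| split; [| right]].
  exists (pi (Ordinal (ltn_trans m0 (ltn_ord m)))); rewrite ?permK //; last by split; [| left].
  by rewrite eq_sym (inj_eq perm_inj) -val_eqE /= -lt0n.
have := (T_eq_adj pi sigma w u).1 E v x vx; rewrite /adj px omax_r // => ->.
have sv := ymax _ pv; have sx : (pos sigma x <= pos sigma y)%N by apply: ymax; rewrite px.
by case: yxv => <-; [rewrite omax_r | rewrite omax_l].
Qed.

Lemma eq_sign_of_T_eq pi sigma w u : T pi w = T sigma u ->
  forall m, (0 < m)%N -> w m = u m.
Proof.
move=> E m m0.
have [y [py my ymax]] := exists_prefix_last pi sigma m.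
have [y' [py' my' ymax']] := exists_prefix_last sigma pi m.
have wm := sign_prefix_last E m0 py ymax.
have um := sign_prefix_last (esym E) m0 py' ymax'.
move: my; rewrite leq_eqVlt => /orP[/eqP/val_inj my | my]; first by rewrite wm my.
move: my'; rewrite leq_eqVlt => /orP[/eqP/val_inj my' | my']; first by rewrite um my'.
have y'y : y' != y by apply: (contraTneq _ my') => ->; rewrite -leqNgt.
have := (T_eq_adj pi sigma w u).1 E y' y y'y.
rewrite /adj omax_l ?(ltnW (leq_ltn_trans py my')) // omax_r ?(ltnW (leq_ltn_trans py' my)) //.
by rewrite -um -wm => ->.
Qed.

(* The sign at position 0 never matters, hence [0 < l]. *)
Definition const_between w a b :=
  forall l, (0 < l)%N -> (omin a b <= l <= omax a b)%N -> w l = w (omax a b).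

Lemma const_betweenC w a b : const_between w a b -> const_between w b a.
Proof. by rewrite /const_between omaxC ominC. Qed.

Lemma sign_between_pi_sigma pi sigma w u : T pi w = T sigma u ->
  forall m x, (0 < m)%N -> (pos pi x <= m <= pos sigma x)%N -> w m = w (pos sigma x).
Proof.
move=> E m; have [k] := ubnP (n - m); elim: k m => // k IH m nm x m0 /andP[px mx].
move: mx; rewrite leq_eqVlt => /orP[/eqP/val_inj -> // | mx].
have [y [py _ ymax]] := exists_prefix_last pi sigma m.
have sxy := ymax x px.
have y0 : (0 < pos sigma y)%N by lia.
rewrite (sign_prefix_last E m0 py ymax) -(eq_sign_of_T_eq E y0); symmetry.
by apply: IH; have := ltn_ord (pos sigma x); lia.
Qed.

Lemma const_between_of_T_eq pi sigma w u : T pi w = T sigma u ->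
  forall x, const_between w (pos pi x) (pos sigma x).
Proof.
move=> E x l l0; rewrite val_omin val_omax.
have [px_sx | sx_px] := leqP (pos pi x) (pos sigma x).
  by rewrite omax_r // => lx; apply: (sign_between_pi_sigma E); lia.
rewrite omax_l ?(ltnW sx_px) // => lx.
rewrite (eq_sign_of_T_eq E l0) (eq_sign_of_T_eq E (leq_trans l0 _)); last by lia.
by apply: (sign_between_pi_sigma (esym E)); lia.
Qed.

Lemma const_between_omax w a b c : const_between w a b ->
  (0 < omax a c)%N -> (0 < omax b c)%N -> w (omax a c) = w (omax b c).
Proof.
wlog ab : a b / (a <= b)%N => [hwlog wab ac0 bc0 | wab ac0 bc0].
  have [ab | /ltnW ba] := leqP a b; first exact: hwlog.
  by symmetry; apply: hwlog => //; apply: const_betweenC.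
have [bc | cb] := leqP b c; first by rewrite !omax_r // (leq_trans ab bc).
rewrite [omax b c]omax_l ?(ltnW cb) // -[b in RHS](omax_r ab); apply: wab => //.
by rewrite val_omin val_omax !val_omax; lia.
Qed.

Lemma T_eq_of_const_between pi sigma w u :
  (forall m, (0 < m)%N -> w m = u m) ->
  (forall x, const_between w (pos pi x) (pos sigma x)) ->
  T pi w = T sigma u.
Proof.
move=> wu wconst; apply/T_eq_adj.
(* Pass through the position [omax (pos sigma x) (pos pi y)], which must avoid the unconstrained
   [w 0]; if it is 0, the one obtained by swapping [x] and [y] is not. *)
suff adj_eq x y : x != y -> (0 < omax (pos sigma x) (pos pi y))%N ->
    adj pi w x y = adj sigma u x y.
  move=> x y xy; have [xy0 | xy0] := posnP (omax (pos sigma x) (pos pi y)); last exact: adj_eq.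
  rewrite adjC [adj sigma u x y]adjC; apply: adj_eq; first by rewrite eq_sym.
  by have := omax_pos_gt0 sigma xy; move: xy0; rewrite !val_omax; lia.
move=> xy xy0; rewrite /adj -wu ?omax_pos_gt0 //.
rewrite (const_between_omax (wconst x) (omax_pos_gt0 pi xy) xy0) omaxC [in RHS]omaxC.
by apply: const_between_omax; rewrite // omaxC // omax_pos_gt0 // eq_sym.
Qed.

Lemma const_betweenE w a b :
  const_between w a b <->
  ((nat_of_ord a = 0 \/ nat_of_ord b = 0) /\
    (forall l, (0 < l)%N -> (l <= omax a b)%N -> w l = w (omax a b))) \/
  (forall l, (omin a b <= l)%N -> (l <= omax a b)%N -> w l = w a /\ w a = w b).
Proof.
have [a_mid b_mid] : (omin a b <= a <= omax a b)%N /\ (omin a b <= b <= omax a b)%N.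
  by rewrite val_omin val_omax; lia.
split=> [wab | [[_ wab] l l0 /andP[_ lb] | wab l l0 /andP[al lb]]].
- have [min0 | min_gt0] := posnP (omin a b).
    left; split=> [|l l0 lb]; first by move: min0; rewrite val_omin; lia.
    by apply: wab; rewrite // min0.
  have wmax l : (omin a b <= l <= omax a b)%N -> w l = w (omax a b).
    by move=> /[dup] /andP[al _]; apply: wab; apply: leq_trans al.
  by right=> l al lb; rewrite (wmax l) ?al ?lb // (wmax a a_mid) (wmax b b_mid).
- exact: wab.
- have [-> _] := wab l al lb.
  by have [-> _] := wab (omax a b) (leq_trans al lb) (leqnn _).
Qed.

End ThresholdGraphs.

Theorem lemma3 (n : nat) (pi sigma : 'S_n) (w u : 'I_n -> bool) :
  (2 <= n)%N ->
  (T pi w = T sigma u <->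
   ((forall k : 'I_n, (0 < k)%N -> w k = u k) /\
    (forall i : 'I_n,
       let j := (pi^-1)%g i in
       let k := (sigma^-1)%g i in
       let mx := if (j <= k)%N then k else j in
       let mn := if (j <= k)%N then j else k in
       ((nat_of_ord j = 0%N \/ nat_of_ord k = 0%N) /\
        (forall l : 'I_n, (0 < l)%N -> (l <= mx)%N -> w l = w mx))
       \/
       (forall l : 'I_n, (mn <= l)%N -> (l <= mx)%N -> w l = w j /\ w j = w k)))).
Proof.
move=> _; split=> [E | [wu wconst]].
  split=> [k |i]; first exact: eq_sign_of_T_eq E k.
  exact/const_betweenE/(const_between_of_T_eq E).
by apply: T_eq_of_const_between => // x; apply/const_betweenE/wconst.
Qed.
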